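(* Let $(E,\rho)$ be a complete partial $b_v(s)$ metric space and let $S:E\to E$ satisfy $\rho(Su,Sw)\le\lambda\rho(u,w)$ for all $u,w\in E$, where $\lambda\in[0,1)$. Then $S$ has a unique fixed point $b\in E$, and $\rho(b,b)=0$.
   Context: Let $E$ be a nonempty set and $v\in\mathbb{N}$. $(E,\rho)$, with $\rho:E\times E\to[0,\infty)$, is a partial $b_v(s)$ metric space if there is a real $s\ge1$ such that for all $u,w,z_1,\dots,z_v\in E$: (1) $u=w$ iff $\rho(u,u)=\rho(u,w)=\rho(w,w)$; (2) $\rho(u,u)\le\rho(u,w)$; (3) $\rho(u,w)=\rho(w,u)$; (4) $\rho(u,w)\le s[\rho(u,z_1)+\rho(z_1,z_2)+\dots+\rho(z_{v-1},z_v)+\rho(z_v,w)]-\sum_{i=1}^v\rho(z_i,z_i)$. A sequence $\{u_n\}$ in $E$ converges to $u\in E$ if $\lim_{n\to\infty}\rho(u_n,u)=\rho(u,u)$; it is Cauchy if $\lim_{n,m\to\infty}\rho(u_n,u_m)$ exists and is finite. $(E,\rho)$ is complete if for every Cauchy sequence $\{u_n\}$ there is $u\in E$ with $\lim_{n,m\to\infty}\rho(u_n,u_m)=\lim_{n\to\infty}\rho(u_n,u)=\rho(u,u)$. *)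

From Stdlib Require Import Reals Lra.
Open Scope R_scope.

Fixpoint chain_sum {E : Type} (rho : E -> E -> R) (z : nat -> E) (k : nat) : R :=
  match k with
  | O => 0
  | S k' => chain_sum rho z k' + rho (z k) (z (S k))
  end.

Fixpoint diag_sum {E : Type} (rho : E -> E -> R) (z : nat -> E) (k : nat) : R :=
  match k with
  | O => 0
  | S k' => diag_sum rho z k' + rho (z k) (z k)
  end.

(* Partial b_v(s) metric space; v in N is taken to be >= 1; the points
   z_1..z_v are given by z : nat -> E (only indices 1..v matter). *)
Definition partial_bv_metric {E : Type} (v : nat) (s : R) (rho : E -> E -> R) : Prop :=
  (1 <= v)%nat /\ 1 <= s /\
  (forall u w, 0 <= rho u w) /\
  (forall u w, u = w <-> (rho u u = rho u w /\ rho u w = rho w w)) /\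
  (forall u w, rho u u <= rho u w) /\
  (forall u w, rho u w = rho w u) /\
  (forall (u w : E) (z : nat -> E),
      rho u w <= s * (rho u (z 1%nat) + chain_sum rho z (v - 1) + rho (z v) w)
                 - diag_sum rho z v).

Definition double_limit (f : nat -> nat -> R) (L : R) : Prop :=
  forall eps, eps > 0 -> exists N, forall n m, (n >= N)%nat -> (m >= N)%nat ->
    Rabs (f n m - L) < eps.

Definition pb_cauchy {E : Type} (rho : E -> E -> R) (u : nat -> E) : Prop :=
  exists L, double_limit (fun n m => rho (u n) (u m)) L.

Definition pb_complete {E : Type} (rho : E -> E -> R) : Prop :=
  forall u : nat -> E, pb_cauchy rho u ->
    exists x : E,
      double_limit (fun n m => rho (u n) (u m)) (rho x x) /\
      Un_cv (fun n => rho (u n) x) (rho x x).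

(* Taking all intermediate points equal to x in the b_v(s) inequality gives the
   relaxed triangle inequality rho u w <= K (rho u x + rho x w) with K = s v.
   For a lambda-contraction, choose k with K lambda^k <= 1/2: splitting the
   orbit at its k-th point shows that it is bounded, so rho(u_n, u_m) <= lambda^n B
   and the orbit is Cauchy with limit 0.  Completeness yields a limit x with
   rho(x, x) = 0, the relaxed triangle inequality through u_{n+1} forces
   rho(Sx, x) = 0, and axiom (1) turns vanishing distances into equalities. *)

From Stdlib Require Import Reals Lra Lia Arith.
Open Scope R_scope.

Lemma chain_sum_const {E : Type} (rho : E -> E -> R) (x : E) (k : nat) :
  chain_sum rho (fun _ => x) k = INR k * rho x x.
Proof. induction k as [|k IH]; simpl chain_sum; [simpl; ring | rewrite IH, S_INR; ring]. Qed.

Lemma diag_sum_const {E : Type} (rho : E -> E -> R) (x : E) (k : nat) :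
  diag_sum rho (fun _ => x) k = INR k * rho x x.
Proof. induction k as [|k IH]; simpl diag_sum; [simpl; ring | rewrite IH, S_INR; ring]. Qed.

Lemma partial_bv_metric_triangle {E : Type} (v : nat) (s : R) (rho : E -> E -> R) :
  partial_bv_metric v s rho ->
  forall u x w, rho u w <= s * INR v * (rho u x + rho x w).
Proof.
  intros (Hv & Hs & Hpos & _ & Hdiag & _ & Htri) u x w.
  pose proof (Htri u w (fun _ => x)) as H; simpl in H.
  rewrite chain_sum_const, diag_sum_const in H.
  replace v with (S (v - 1)) in * by lia.
  rewrite S_INR in *; replace (S (v - 1) - 1)%nat with (v - 1)%nat in H by lia.
  set (n := INR (v - 1)) in *.
  assert (Hn : 0 <= n) by apply pos_INR.
  pose proof (Hdiag x w); pose proof (Hpos u x); pose proof (Hpos x x).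
  assert (0 <= s * n * (rho x w - rho x x)) by (apply Rmult_le_pos; nra).
  assert (0 <= s * n * rho u x) by (apply Rmult_le_pos; nra).
  nra.
Qed.

Lemma bounded_initial_segment (D : nat -> R) (k : nat) :
  exists M, forall j, (j <= k)%nat -> D j <= M.
Proof.
  induction k as [|k [M HM]].
  - exists (D 0%nat); intros j Hj; replace j with 0%nat by lia; lra.
  - exists (Rmax M (D (S k))); intros j Hj.
    destruct (Nat.eq_dec j (S k)) as [->|Hne]; [apply Rmax_r|].
    eapply Rle_trans; [apply HM; lia | apply Rmax_l].
Qed.

Lemma Un_cv_const (c : R) : Un_cv (fun _ => c) c.
Proof. intros eps Heps; exists 0%nat; intros n _; rewrite Rdist_eq; lra. Qed.

Lemma double_limit_unique (f : nat -> nat -> R) (L1 L2 : R) :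
  double_limit f L1 -> double_limit f L2 -> L1 = L2.
Proof.
  intros H1 H2.
  destruct (Req_dec L1 L2) as [|Hne]; [assumption | exfalso].
  assert (Heps : Rabs (L1 - L2) / 2 > 0)
    by (apply Rdiv_lt_0_compat; [apply Rabs_pos_lt; lra | lra]).
  destruct (H1 _ Heps) as [N1 HN1]; destruct (H2 _ Heps) as [N2 HN2].
  set (N := Nat.max N1 N2).
  specialize (HN1 N N ltac:(lia) ltac:(lia)); specialize (HN2 N N ltac:(lia) ltac:(lia)).
  pose proof (Rabs_triang (L1 - f N N) (f N N - L2)) as Htr.
  rewrite Rabs_minus_sym in HN1.
  replace (L1 - f N N + (f N N - L2)) with (L1 - L2) in Htr by ring.
  lra.
Qed.

Section ContractionOrbit.

Variables (E : Type) (rho : E -> E -> R) (K : R) (T : E -> E) (lam : R).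

Hypothesis rho_ge0 : forall u w, 0 <= rho u w.
Hypothesis rho_sym : forall u w, rho u w = rho w u.
Hypothesis rho_triangle : forall u x w, rho u w <= K * (rho u x + rho x w).
Hypothesis K_ge1 : 1 <= K.
Hypothesis lam_ge0 : 0 <= lam.
Hypothesis lam_lt1 : lam < 1.
Hypothesis T_contraction : forall u w, rho (T u) (T w) <= lam * rho u w.

Lemma pow_lt_eventually (y : R) :
  0 < y -> exists N, forall n, (N <= n)%nat -> lam ^ n < y.
Proof.
  intros Hy.
  destruct (pow_lt_1_zero lam ltac:(rewrite Rabs_right; lra) y Hy) as [N HN].
  exists N; intros n Hn.
  specialize (HN n Hn); rewrite Rabs_right in HN; [lra | apply Rle_ge, pow_le; lra].
Qed.

Lemma rho_iter_contract (n : nat) (a b : E) :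
  rho (Nat.iter n T a) (Nat.iter n T b) <= lam ^ n * rho a b.
Proof.
  induction n as [|n IH]; simpl; [lra|].
  eapply Rle_trans; [apply T_contraction|].
  rewrite Rmult_assoc; apply Rmult_le_compat_l; assumption.
Qed.

Lemma orbit_bounded (x : E) :
  exists B, 0 <= B /\ forall p, rho x (Nat.iter p T x) <= B.
Proof.
  destruct (pow_lt_eventually (/ (2 * K)) ltac:(apply Rinv_0_lt_compat; lra)) as [k Hk].
  specialize (Hk k (le_n k)).
  assert (HKk : K * lam ^ k <= / 2).
  { apply (Rmult_lt_compat_l K) in Hk; [|lra].
    replace (K * / (2 * K)) with (/ 2) in Hk by (field; lra); lra. }
  assert (Hk0 : k <> 0%nat) by (intros ->; simpl in HKk; lra).
  destruct (bounded_initial_segment (fun j => rho x (Nat.iter j T x)) k) as [M HM].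
  assert (HM0 : 0 <= M) by (eapply Rle_trans; [apply rho_ge0 | apply (HM 0%nat); lia]).
  exists (2 * K * M); split; [nra|].
  intros p; induction p as [p IH] using (well_founded_induction Wf_nat.lt_wf).
  destruct (le_lt_dec p k) as [Hpk|Hkp]; [specialize (HM p Hpk); simpl in HM; nra|].
  (* Split at the k-th point: rho(x, u_p) <= K (M + lam^k B) <= K M + B / 2 = B. *)
  replace p with (k + (p - k))%nat by lia.
  pose proof (rho_triangle x (Nat.iter k T x) (Nat.iter (k + (p - k)) T x)) as Hsplit.
  pose proof (HM k (le_n k)) as Hk_le.
  rewrite Nat.iter_add in *.
  pose proof (rho_iter_contract k x (Nat.iter (p - k) T x)) as Htail.
  specialize (IH (p - k)%nat ltac:(lia)).
  pose proof (pow_le lam k lam_ge0).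
  assert (rho x (Nat.iter (p - k) T x) * (K * lam ^ k) <= 2 * K * M * / 2)
    by (apply Rmult_le_compat; [apply rho_ge0 | apply Rmult_le_pos; lra | exact IH | exact HKk]).
  nra.
Qed.

Lemma orbit_rho_le (x : E) (B : R) :
  (forall p, rho x (Nat.iter p T x) <= B) ->
  forall n m, (n <= m)%nat -> rho (Nat.iter n T x) (Nat.iter m T x) <= lam ^ n * B.
Proof.
  intros HB n m Hnm.
  replace m with (n + (m - n))%nat by lia; rewrite Nat.iter_add.
  eapply Rle_trans; [apply rho_iter_contract|].
  apply Rmult_le_compat_l; [apply pow_le; lra | apply HB].
Qed.

Lemma orbit_double_limit0 (x : E) :
  double_limit (fun n m => rho (Nat.iter n T x) (Nat.iter m T x)) 0.
Proof.
  destruct (orbit_bounded x) as [B [HB0 HB]].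
  intros eps Heps.
  destruct (pow_lt_eventually (eps / (B + 1)) ltac:(apply Rdiv_lt_0_compat; lra)) as [N HN].
  assert (Hsmall : forall n, (N <= n)%nat -> lam ^ n * B < eps).
  { intros n Hn; specialize (HN n Hn).
    apply (Rmult_lt_compat_r (B + 1)) in HN; [|lra].
    replace (eps / (B + 1) * (B + 1)) with eps in HN by (field; lra).
    pose proof (pow_le lam n lam_ge0); nra. }
  exists N; intros n m Hn Hm.
  rewrite Rminus_0_r, Rabs_right by (apply Rle_ge, rho_ge0).
  destruct (le_lt_dec n m) as [Hnm|Hmn].
  - eapply Rle_lt_trans; [apply (orbit_rho_le x B HB n m Hnm) | apply Hsmall; lia].
  - rewrite rho_sym.
    eapply Rle_lt_trans; [apply (orbit_rho_le x B HB m n); lia | apply Hsmall; lia].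
Qed.

Hypothesis rho_diag_le : forall u w, rho u u <= rho u w.
Hypothesis rho_eq_iff : forall u w, u = w <-> (rho u u = rho u w /\ rho u w = rho w w).

Lemma rho_eq0_eq (a b : E) : rho a b = 0 -> a = b.
Proof.
  intros Hab.
  pose proof (rho_diag_le a b); pose proof (rho_diag_le b a); rewrite (rho_sym b a) in *.
  pose proof (rho_ge0 a a); pose proof (rho_ge0 b b).
  apply rho_eq_iff; lra.
Qed.

Lemma orbit_limit_fixed (x e0 : E) :
  Un_cv (fun n => rho (Nat.iter n T e0) x) 0 -> T x = x.
Proof.
  intros Hcv.
  set (a := fun n => rho (Nat.iter n T e0) x) in Hcv.
  assert (Hbound : forall n, rho (T x) x <= K * (lam * a n + a (n + 1)%nat)).
  { intros n; unfold a; rewrite Nat.add_1_r.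
    eapply Rle_trans; [apply (rho_triangle _ (Nat.iter (S n) T e0))|].
    apply Rmult_le_compat_l; [lra|].
    apply Rplus_le_compat_r; rewrite rho_sym; apply T_contraction. }
  assert (Hlim : Un_cv (fun n => K * (lam * a n + a (n + 1)%nat)) (K * (lam * 0 + 0))).
  { apply CV_mult; [apply Un_cv_const|].
    apply CV_plus; [apply CV_mult; [apply Un_cv_const | exact Hcv]|].
    exact (CV_shift' a 1 0 Hcv). }
  pose proof (Rle_cv_lim Hbound (Un_cv_const (rho (T x) x)) Hlim).
  pose proof (rho_ge0 (T x) x).
  apply rho_eq0_eq; lra.
Qed.

Lemma fixed_point_unique (b c : E) : T b = b -> T c = c -> c = b.
Proof.
  intros Hb Hc.
  pose proof (T_contraction c b) as H; rewrite Hb, Hc in H.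
  pose proof (rho_ge0 c b).
  apply rho_eq0_eq; nra.
Qed.

Hypothesis rho_complete : pb_complete rho.

Lemma fixed_point_exists (e0 : E) : exists b, T b = b /\ rho b b = 0.
Proof.
  pose proof (orbit_double_limit0 e0) as Hcauchy.
  destruct (rho_complete (fun n => Nat.iter n T e0) (ex_intro _ 0 Hcauchy))
    as [b [Hdl Hcv]].
  assert (Hbb : rho b b = 0) by exact (double_limit_unique _ _ _ Hdl Hcauchy).
  rewrite Hbb in Hcv.
  exists b; split; [exact (orbit_limit_fixed b e0 Hcv) | exact Hbb].
Qed.

End ContractionOrbit.

Theorem mainTheorem2 (E : Type) (e0 : E) (v : nat) (s : R) (rho : E -> E -> R)
  (Hmet : partial_bv_metric v s rho) (Hcomp : pb_complete rho)
  (S : E -> E) (lam : R) (Hlam0 : 0 <= lam) (Hlam1 : lam < 1)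
  (Hcontr : forall u w, rho (S u) (S w) <= lam * rho u w) :
  exists b : E, S b = b /\ rho b b = 0 /\ (forall c : E, S c = c -> c = b).
Proof.
  pose proof (partial_bv_metric_triangle v s rho Hmet) as Htri.
  destruct Hmet as (Hv & Hs & Hpos & Heq & Hdiag & Hsym & _).
  assert (HK : 1 <= s * INR v) by (pose proof (le_INR 1 v Hv); simpl in *; nra).
  destruct (fixed_point_exists E rho (s * INR v) S lam Hpos Hsym Htri HK Hlam0 Hlam1
              Hcontr Hdiag Heq Hcomp e0) as [b [Hb Hbb]].
  exists b; split; [exact Hb | split; [exact Hbb|]].
  intros c Hc; exact (fixed_point_unique E rho S lam Hpos Hsym Hlam1 Hcontr Hdiag Heq b c Hb Hc).
Qed.
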